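(* Suppose $M$ is a real symmetric $g\times g$ matrix of signature $(g-1,1)$, and $c \in \mathbb{C}^g$ satisfies $\overline{c}^\top M c < 0$. Then $c^\top Mc \neq 0$, and the real symmetric matrix $M+M\operatorname{Re}\left(\left(-\tfrac12 c^\top Mc\right)^{-1}cc^\top\right)M$ is positive definite. *)

From HB Require Import structures.
From mathcomp Require Import all_boot all_order all_algebra.
From mathcomp Require Import complex.
Set Implicit Arguments. Unset Strict Implicit. Unset Printing Implicit Defensive.
Import Order.TTheory GRing.Theory Num.Theory.
Local Open Scope ring_scope.

(* signature (p,q) of a real symmetric matrix: its characteristic polynomial
   splits over R (as it does for symmetric matrices) with eigenvalue list s
   (with multiplicity) having p positive and q negative entries. *)
Definition has_signature (R : rcfType) (g : nat) (M : 'M[R]_g) (p q : nat) :=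
  exists s : seq R,
    char_poly M = \prod_(x <- s) ('X - x%:P) /\
    count (fun x => 0 < x) s = p /\ count (fun x => x < 0) s = q.

Definition sym_mx (R : rcfType) (g : nat) (M : 'M[R]_g) := M^T = M.

Definition posdef_mx (R : rcfType) (g : nat) (A : 'M[R]_g) :=
  forall v : 'cV[R]_g, v != 0 -> 0 < (v^T *m A *m v) 0 0.

Definition mxC (R : rcfType) m n (A : 'M[R]_(m, n)) : 'M[R[i]]_(m, n) :=
  map_mx (fun x => x%:C%C) A.
Definition mxconj (R : rcfType) m n (A : 'M[R[i]]_(m, n)) : 'M[R[i]]_(m, n) :=
  map_mx (fun z => (z^*)%C) A.
Definition mxRe (R : rcfType) m n (A : 'M[R[i]]_(m, n)) : 'M[R]_(m, n) :=
  map_mx (@complex.Re R) A.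

From HB Require Import structures.
From mathcomp Require Import all_boot all_order all_algebra.
From mathcomp Require Import complex.
From mathcomp Require Import ring lra.
Import Order.TTheory GRing.Theory Num.Theory Num.Def.
Local Open Scope ring_scope.
Set Implicit Arguments. Unset Strict Implicit. Unset Printing Implicit Defensive.

(* Since M has a single negative eigenvalue, the form F(x, y) = x^T M y is
   positive definite on the M-orthogonal complement of any x with
   F(x) := F(x, x) < 0: if F(x) < 0, F(x, y) = 0 and F(y) <= 0, some complex
   combination of x and y has no component on the negative eigenvector of M,
   hence a nonnegative norm, whereas its norm is |.|^2 F(x) + |.|^2 F(y) < 0.
   Write c = a + i b, so that conj(c)^T M c = F(a) + F(b) < 0 and
   c^T M c = F(a) - F(b) + 2i F(a, b). If c^T M c = 0, then F(a) = F(b) < 0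
   with a orthogonal to b, which contradicts positivity on b^perp.
   Rescaling c by a square root of (c^T M c)^-1 leaves the matrix unchanged
   and makes F(a) - F(b) = 1, F(a, b) = 0; its quadratic form is then
   F(v) - 2 F(v, a)^2 + 2 F(v, b)^2. Writing v = w + t b with w in b^perp,
   Cauchy-Schwarz on b^perp gives F(w, a)^2 <= F(w) F(a), which bounds the
   quadratic form below by -(F(a) + F(b)) (F(w) - t^2 F(b)) > 0. *)

Definition mxform (T : comNzRingType) n (A : 'M[T]_n) (u v : 'cV[T]_n) : T :=
  (u^T *m A *m v) 0 0.

Section MxForm.
Variables (T : comNzRingType) (n : nat) (A : 'M[T]_n).

Lemma mxformDl u1 u2 v : mxform A (u1 + u2) v = mxform A u1 v + mxform A u2 v.
Proof. by rewrite /mxform linearD /= !mulmxDl mxE. Qed.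

Lemma mxformDr u v1 v2 : mxform A u (v1 + v2) = mxform A u v1 + mxform A u v2.
Proof. by rewrite /mxform mulmxDr mxE. Qed.

Lemma mxformZl a u v : mxform A (a *: u) v = a * mxform A u v.
Proof. by rewrite /mxform linearZ /= -!scalemxAl mxE. Qed.

Lemma mxformZr a u v : mxform A u (a *: v) = a * mxform A u v.
Proof. by rewrite /mxform -scalemxAr mxE. Qed.

Lemma mxformBl u1 u2 v : mxform A (u1 - u2) v = mxform A u1 v - mxform A u2 v.
Proof. by rewrite -scaleN1r mxformDl mxformZl mulN1r. Qed.

Lemma mxformBr u v1 v2 : mxform A u (v1 - v2) = mxform A u v1 - mxform A u v2.
Proof. by rewrite -scaleN1r mxformDr mxformZr mulN1r. Qed.

Lemma mxform0r u : mxform A u 0 = 0.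
Proof. by rewrite /mxform mulmx0 mxE. Qed.

Lemma mxformC u v : A^T = A -> mxform A u v = mxform A v u.
Proof.
move=> symA; rewrite /mxform -[u^T *m A *m v]trmxK [LHS]mxE.
by rewrite !trmx_mul trmxK symA mulmxA.
Qed.

End MxForm.

Lemma mxformDm (T : comNzRingType) n (A B : 'M[T]_n) u v :
  mxform (A + B) u v = mxform A u v + mxform B u v.
Proof. by rewrite /mxform mulmxDr mulmxDl mxE. Qed.

Lemma char_poly_conj (R : comUnitRingType) n (P D : 'M[R]_n) : P \in unitmx ->
  char_poly (invmx P *m D *m P) = char_poly D.
Proof.
move=> unitP; rewrite /char_poly /char_poly_mx.
have -> : 'X%:M - map_mx polyC (invmx P *m D *m P) =
    map_mx polyC (invmx P) *m ('X%:M - map_mx polyC D) *m map_mx polyC P.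
  rewrite mulmxBr mulmxBl !map_mxM; congr (_ - _).
  by rewrite scalar_mxC -mulmxA -map_mxM mulVmx // map_mx1 mulmx1.
by rewrite !det_mulmx mulrC mulrA -det_mulmx -map_mxM mulmxV // map_mx1 det1 mul1r.
Qed.

Section SpectralForm.
Variables (C : numClosedFieldType) (n : nat) (A : 'M[C]_n).
Hypothesis normalA : A \is normalmx.
Local Notation P := (spectralmx A).
Local Notation d := (spectral_diag A).

Lemma mxform_spectral u w :
  mxform A (map_mx conjC u) w = \sum_i ((P *m u) i 0)^* * d 0 i * (P *m w) i 0.
Proof.
rewrite /mxform {1}(orthomx_spectralP normalA) invmx_unitary ?spectral_unitarymx //.
rewrite !mulmxA.
have -> : (map_mx conjC u)^T *m map_mx conjC P^T = (map_mx conjC (P *m u))^T.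
  by rewrite map_mxM trmx_mul !map_trmx.
rewrite -[_ *m P *m w]mulmxA mxE; apply: eq_bigr => i _.
rewrite !mxE (bigD1 i) //= big1 ?addr0 => [|j /negbTE nji]; last first.
  by rewrite !mxE nji mulr0n mulr0.
by rewrite !mxE eqxx mulr1n.
Qed.

Lemma spectral_diag_perm_eq s : char_poly A = \prod_(x <- s) ('X - x%:P) ->
  perm_eq [seq d 0 i | i : 'I_n] s.
Proof.
move=> charA; apply: prod_XsubC_eq; rewrite -charA big_image.
rewrite [in RHS](orthomx_spectralP normalA) char_poly_conj ?spectral_unit //.
rewrite char_poly_trig ?diag_mx_is_trig //.
by apply: eq_bigr => i _; rewrite mxE eqxx mulr1n.
Qed.

Lemma spectral_term_ge0 (z : 'cV[C]_n) i : (~~ (0 < d 0 i) -> (P *m z) i 0 = 0) ->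
  0 <= ((P *m z) i 0)^* * d 0 i * (P *m z) i 0.
Proof.
case: (boolP (0 < d 0 i)) => [d_gt0 _ | _ -> //]; last by rewrite mulr0.
by rewrite mulrAC; apply: mulr_ge0 (ltW d_gt0); rewrite mulrC mul_conjC_ge0.
Qed.

Lemma mxform_spectral_ge0 z : (forall i, ~~ (0 < d 0 i) -> (P *m z) i 0 = 0) ->
  0 <= mxform A (map_mx conjC z) z.
Proof.
move=> z_good; rewrite mxform_spectral; apply: sumr_ge0 => i _.
exact/spectral_term_ge0/z_good.
Qed.

Lemma mxform_spectral_gt0 z : (forall i, ~~ (0 < d 0 i) -> (P *m z) i 0 = 0) ->
  z != 0 -> 0 < mxform A (map_mx conjC z) z.
Proof.
move=> z_good z_neq0; rewrite lt_def mxform_spectral_ge0 // andbT.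
rewrite mxform_spectral psumr_eq0 => [|i _]; last exact/spectral_term_ge0/z_good.
apply: contra z_neq0 => /allP z_terms0.
suff Pz0 : P *m z = 0 by rewrite -(mulKmx (spectral_unit A) z) Pz0 mulmx0.
apply/matrixP => i j; rewrite (ord1 j) [RHS]mxE.
have [d_gt0 | ] := boolP (0 < d 0 i); last by move/z_good.
move: (z_terms0 i (mem_index_enum _)); rewrite /= mulrAC mulf_eq0 (gt_eqF d_gt0) orbF.
by rewrite mulrC mul_conjC_eq0 => /eqP.
Qed.

End SpectralForm.

Definition mxIm (R : rcfType) m n (A : 'M[R[i]]_(m, n)) : 'M[R]_(m, n) :=
  map_mx (@complex.Im R) A.

Section Complexification.
Variable R : rcfType.

Lemma ltr0c (k : R) : (0 < k%:C%C) = (0 < k). Proof. exact: ltcR. Qed.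
Lemma ltrc0 (k : R) : (k%:C%C < 0) = (k < 0). Proof. exact: ltcR. Qed.
Lemma lerc0 (k : R) : (k%:C%C <= 0) = (k <= 0). Proof. exact: lecR. Qed.

Lemma mxCE m n (A : 'M[R]_(m, n)) : mxC A = map_mx (real_complex R) A.
Proof. by apply/matrixP => i j; rewrite !mxE. Qed.

Lemma mxCM m n p (A : 'M[R]_(m, n)) (B : 'M[R]_(n, p)) :
  mxC (A *m B) = mxC A *m mxC B.
Proof. by rewrite !mxCE map_mxM. Qed.

Lemma trmx_mxC m n (A : 'M[R]_(m, n)) : (mxC A)^T = mxC A^T.
Proof. by rewrite !mxCE map_trmx. Qed.

Lemma mxC_eq0 m n (A : 'M[R]_(m, n)) : (mxC A == 0) = (A == 0).
Proof. by rewrite mxCE map_mx_eq0. Qed.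

Lemma mxconj_mxC m n (A : 'M[R]_(m, n)) : mxconj (mxC A) = mxC A.
Proof. by apply/matrixP => i j; rewrite !mxE /= oppr0. Qed.

Lemma mxform_mxC n (M : 'M[R]_n) x y :
  mxform (mxC M) (mxC x) (mxC y) = (mxform M x y)%:C%C.
Proof. by rewrite /mxform !mxCE map_trmx -!map_mxM mxE. Qed.

Lemma mxC_normal n (M : 'M[R]_n) : M^T = M -> mxC M \is normalmx.
Proof.
move=> symM; rewrite qualifE.
by rewrite [map_mx _ _](_ : _ = mxC M) // trmx_mxC symM; exact: mxconj_mxC.
Qed.

Lemma mxC_ReIm m n (c : 'M[R[i]]_(m, n)) : c = mxC (mxRe c) + 'i%C *: mxC (mxIm c).
Proof. by apply/matrixP => i j; rewrite !mxE -complexE. Qed.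

Lemma mxconj_ReIm m n (c : 'M[R[i]]_(m, n)) :
  mxconj c = mxC (mxRe c) - 'i%C *: mxC (mxIm c).
Proof.
apply/matrixP => i j; rewrite !mxE; case: (c i j) => x y.
by apply/eqP; rewrite eq_complex /=; apply/andP; split; apply/eqP; ring.
Qed.

Lemma mxRe_mxC_mul m n p q (X : 'M[R]_(m, n)) (K : 'M[R[i]]_(n, p))
    (Y : 'M[R]_(p, q)) :
  mxRe (mxC X *m K *m mxC Y) = X *m mxRe K *m Y.
Proof.
rewrite [K in LHS]mxC_ReIm mulmxDr mulmxDl -scalemxAr -scalemxAl -!mxCM.
apply/matrixP => i j; rewrite !mxE /=; ring.
Qed.

End Complexification.

Section FormReIm.
Variables (R : rcfType) (n : nat) (M : 'M[R]_n) (c : 'cV[R[i]]_n).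
Hypothesis symM : M^T = M.
Local Notation a := (mxRe c).
Local Notation b := (mxIm c).

Lemma mxform_mxC_l v :
  mxform (mxC M) (mxC v) c = (mxform M v a +i* mxform M v b)%C.
Proof.
rewrite {1}(mxC_ReIm c) mxformDr mxformZr !mxform_mxC.
by apply/eqP; rewrite eq_complex /=; apply/andP; split; apply/eqP; ring.
Qed.

Lemma mxform_conj_ReIm :
  mxform (mxC M) (mxconj c) c = (mxform M a a + mxform M b b)%:C%C.
Proof.
rewrite mxconj_ReIm mxformBl mxformZl !mxform_mxC_l (mxformC b a symM).
by apply/eqP; rewrite eq_complex /=; apply/andP; split; apply/eqP; ring.
Qed.

Lemma mxform_ReIm :
  mxform (mxC M) c c = ((mxform M a a - mxform M b b) +i* (2 * mxform M a b))%C.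
Proof.
rewrite {1}(mxC_ReIm c) mxformDl mxformZl !mxform_mxC_l (mxformC b a symM).
by apply/eqP; rewrite eq_complex /=; apply/andP; split; apply/eqP; ring.
Qed.

Lemma mxform_Re_rank1 (k : R[i]) v :
  mxform (M *m mxRe (k *: (c *m c^T)) *m M) v v =
  complex.Re (k * mxform (mxC M) (mxC v) c ^+ 2).
Proof.
have symMC : (mxC M)^T = mxC M by rewrite trmx_mxC symM.
rewrite [LHS]/mxform.
have -> : v^T *m (M *m mxRe (k *: (c *m c^T)) *m M) *m v =
    mxRe (mxC (v^T *m M) *m (k *: (c *m c^T)) *m mxC (M *m v)).
  by rewrite mxRe_mxC_mul !mulmxA.
have -> : mxC (v^T *m M) *m (k *: (c *m c^T)) *m mxC (M *m v) =
    k *: ((mxC (v^T *m M) *m c) *m (c^T *m mxC (M *m v))).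
  by rewrite -scalemxAr -scalemxAl !mulmxA.
rewrite [LHS]mxE 2![in LHS]mxE big_ord1 !mxCM -trmx_mxC mulmxA.
by rewrite -/(mxform _ (mxC v) c) -/(mxform _ c (mxC v)) (mxformC c _ symMC) -expr2.
Qed.

End FormReIm.

Lemma mxform_CauchySchwarz_ortho (R : realFieldType) n (A : 'M[R]_n) (b a w : 'cV_n) :
  A^T = A -> (forall x, mxform A b x = 0 -> 0 <= mxform A x x) ->
  mxform A b a = 0 -> mxform A b w = 0 ->
  mxform A w a ^+ 2 <= mxform A w w * mxform A a a.
Proof.
move=> symA psd ba0 bw0.
set p := mxform A w a; set W := mxform A w w; set X := mxform A a a.
have psd_comb s t : 0 <= s ^+ 2 * W + 2 * s * t * p + t ^+ 2 * X.
  have := psd (s *: w + t *: a).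
  rewrite mxformDr !mxformZr ba0 bw0 !mulr0 addr0 => /(_ erefl).
  rewrite !mxformDl !mxformDr !mxformZl !mxformZr (mxformC a w symA) -/p -/W -/X.
  lra.
have W_ge0 := psd_comb 1 0; have X_ge0 := psd_comb 0 1.
have [X0 | X_gt0] : X = 0 \/ 0 < X by move: X_ge0; rewrite le_eqVlt; lra.
  by have := psd_comb p (- (W + 1)); rewrite X0; nra.
by have := psd_comb X (- p); nra.
Qed.

Lemma card_spectral_diag_gt0 (R : rcfType) n (M : 'M[R]_n) p q :
  M^T = M -> has_signature M p q ->
  #|[pred i | 0 < spectral_diag (mxC M) 0 i]| = p.
Proof.
move=> symM [s [charM [pos_s _]]].
have charMC : char_poly (mxC M) = \prod_(x <- map (real_complex R) s) ('X - x%:P).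
  by rewrite mxCE -map_char_poly charM map_prod_XsubC big_map.
move: (permP (spectral_diag_perm_eq (mxC_normal symM) charMC) (fun x => 0 < x)).
rewrite !count_map -pos_s (eq_count (a2 := fun x => 0 < x)) => [<-|x].
  by rewrite cardE /enum_mem size_filter.
by rewrite /= ltcR.
Qed.

Section Lorentzian.
Variables (R : rcfType) (n : nat) (M : 'M[R]_n).
Hypotheses (symM : M^T = M) (sigM : has_signature M n.-1 1).
Local Notation P := (spectralmx (mxC M)).
Local Notation d := (spectral_diag (mxC M)).

Lemma spectral_diag_nonpos_uniq i j :
  ~~ (0 < d 0 i) -> ~~ (0 < d 0 j) -> i = j.
Proof.
have : (#|[predC [pred k | (0 < d 0 k)%R]]| <= 1)%N.
  have := cardC [pred k | 0 < d 0 k].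
  rewrite card_ord (card_spectral_diag_gt0 symM sigM).
  by move=> cardT; rewrite -(leq_add2l n.-1) cardT addn1 leqSpred.
by move=> /card_le1_eqP le1 i_nonpos j_nonpos; apply: le1; rewrite inE.
Qed.

Lemma mxform_ortho_neg_gt0 x y :
  mxform M x x < 0 -> mxform M x y = 0 -> y != 0 -> 0 < mxform M y y.
Proof.
move=> x_neg xy0 y_neq0; rewrite ltNge; apply/negP => y_nonpos.
have normalMC := mxC_normal symM.
have conjC_mxC u : map_mx conjC (mxC u) = mxC u := mxconj_mxC u.
have formE u : (mxform M u u)%:C%C = mxform (mxC M) (map_mx conjC (mxC u)) (mxC u).
  by rewrite conjC_mxC mxform_mxC.
have [k k_nonpos | all_pos] := pickP [pred k | ~~ (0 < d 0 k)]; last first.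
  have : 0 <= mxform (mxC M) (map_mx conjC (mxC x)) (mxC x).
    by apply: mxform_spectral_ge0 => // i; move: (all_pos i) => /= ->.
  by rewrite -formE ler0c leNgt x_neg.
have only_k i : ~~ (0 < d 0 i) -> i = k by move/spectral_diag_nonpos_uniq; apply.
set X := P *m mxC x; set Y := P *m mxC y.
have [Yk0 | Yk_neq0] := eqVneq (Y k 0) 0.
  have : 0 < mxform (mxC M) (map_mx conjC (mxC y)) (mxC y).
    by apply: mxform_spectral_gt0; rewrite ?mxC_eq0 // => i /only_k ->.
  by rewrite -formE ltr0c ltNge y_nonpos.
pose z := Y k 0 *: mxC x - X k 0 *: mxC y.
have : 0 <= mxform (mxC M) (map_mx conjC z) z.
  apply: mxform_spectral_ge0 => // i /only_k ->.
  by rewrite mulmxBr -!scalemxAr !mxE mulrC subrr.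
have -> : mxform (mxC M) (map_mx conjC z) z =
    (Y k 0)^* * Y k 0 * (mxform M x x)%:C%C +
    (X k 0)^* * X k 0 * (mxform M y y)%:C%C.
  rewrite map_mxB !map_mxZ /= !conjC_mxC.
  rewrite mxformBl !mxformBr !mxformZl !mxformZr !mxform_mxC xy0 (mxformC y x symM) xy0.
  by ring.
rewrite lt_geF // -[X in _ < X](addr0 0) ltr_leD // ?pmulr_rlt0 ?ltrc0 //.
- by rewrite mulrC mul_conjC_gt0.
- by rewrite mulr_ge0_le0 ?lerc0 // mulrC mul_conjC_ge0.
Qed.

Lemma mxform_ortho_neg_ge0 x y :
  mxform M x x < 0 -> mxform M x y = 0 -> 0 <= mxform M y y.
Proof.
move=> x_neg xy0; have [-> | y_neq0] := eqVneq y 0; first by rewrite mxform0r.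
exact/ltW/(mxform_ortho_neg_gt0 x_neg).
Qed.

Variable c : 'cV[R[i]]_n.
Local Notation a := (mxRe c).
Local Notation b := (mxIm c).
Hypothesis c_neg : mxform (mxC M) (mxconj c) c < 0.

Let ReIm_neg : mxform M a a + mxform M b b < 0.
Proof. by rewrite -ltrc0 -mxform_conj_ReIm. Qed.

Lemma mxform_neq0_of_conj_neg : mxform (mxC M) c c != 0.
Proof.
apply/eqP; rewrite mxform_ReIm // => /eqP.
rewrite eq_complex /= => /andP[/eqP AB /eqP ab0].
have ab_neg := ReIm_neg; have b_neg : mxform M b b < 0 by lra.
have ba0 : mxform M b a = 0 by rewrite mxformC //; lra.
have := mxform_ortho_neg_ge0 b_neg ba0; lra.
Qed.

Lemma posdef_rank1_update_normalized : mxform (mxC M) c c = 1 ->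
  posdef_mx (M + M *m mxRe (-2 *: (c *m c^T)) *m M).
Proof.
rewrite mxform_ReIm // => /eqP; rewrite eq_complex /= => /andP[/eqP AB /eqP ab0].
move=> v v_neq0; rewrite -/(mxform _ v v) mxformDm mxform_Re_rank1 // mxform_mxC_l /=.
have ab_neg := ReIm_neg; set B := mxform M b b in AB ab_neg *.
have b_neg : B < 0 by lra.
have ba0 : mxform M b a = 0 by rewrite mxformC //; lra.
set t := mxform M v b / B; set w := v - t *: b.
have v_eq : v = w + t *: b by rewrite subrK.
have bw0 : mxform M b w = 0.
  by rewrite mxformBr mxformZr (mxformC b v symM) divfK ?ltr0_neq0 ?subrr.
have wb0 : mxform M w b = 0 by rewrite mxformC.
have CS := mxform_CauchySchwarz_ortho symM (fun=> mxform_ortho_neg_ge0 b_neg) ba0 bw0.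
clearbody t w; rewrite v_eq !mxformDl !mxformDr !mxformZl !mxformZr wb0 bw0 ba0 -/B.
have w_pos : 0 < mxform M w w \/ mxform M w w = 0 /\ t != 0.
  have [w0 | w_neq0] := eqVneq w 0; last first.
    by left; exact: mxform_ortho_neg_gt0 b_neg bw0 w_neq0.
  right; split; first by rewrite w0 mxform0r.
  by apply: contraNneq v_neq0 => t0; rewrite v_eq w0 t0 scale0r addr0.
have {}CS : mxform M w a ^+ 2 <= mxform M w w * (B + 1) by rewrite -AB addrC subrK.
have coef_pos : 0 < - (1 + 2 * B) by lra.
case: w_pos => [Fw_pos | [Fw0 t_neq0]].
  have : 0 < - (1 + 2 * B) * mxform M w w by rewrite mulr_gt0.
  have : 0 <= B * (1 + 2 * B) * t ^+ 2 by rewrite mulr_ge0 ?sqr_ge0 //; nra.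
  nra.
have : 0 < B * (1 + 2 * B) * t ^+ 2 by rewrite mulr_gt0 ?exprn_even_gt0 ?t_neq0 //; nra.
rewrite Fw0 mul0r in CS *; nra.
Qed.

End Lorentzian.

Lemma rank1_div_mxformZ (F : fieldType) n (A : 'M[F]_n) (k u : F) (c : 'cV_n) :
  u != 0 ->
  (k * mxform A (u *: c) (u *: c))^-1 *: ((u *: c) *m (u *: c)^T) =
  (k * mxform A c c)^-1 *: (c *m c^T).
Proof.
move=> u_neq0; rewrite mxformZl mxformZr linearZ /= -scalemxAl -scalemxAr !scalerA.
congr (_ *: _); have -> : k * (u * (u * mxform A c c)) = u * u * (k * mxform A c c).
  by ring.
by rewrite invfM -mulrA mulrAC mulVf ?mul1r // mulf_neq0.
Qed.

Unset Implicit Arguments.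

Theorem mainTheorem4 (R : rcfType) (g : nat) (M : 'M[R]_g) (c : 'cV[R[i]]_g) :
  sym_mx M -> has_signature M g.-1 1 ->
  ((mxconj c)^T *m mxC M *m c) 0 0 < 0 ->
  ((c^T *m mxC M *m c) 0 0 != 0) /\
  posdef_mx (M + M *m mxRe ((- (2%:R^-1) * (c^T *m mxC M *m c) 0 0)^-1 *: (c *m c^T)) *m M).
Proof.
move=> symM sigM c_neg; rewrite -/(mxform (mxC M) c c).
have L_neq0 := mxform_neq0_of_conj_neg symM sigM c_neg.
split=> //.
pose u := sqrtC (mxform (mxC M) c c)^-1.
have u2 : u ^+ 2 = (mxform (mxC M) c c)^-1 := sqrtCK _.
have u_neq0 : u != 0 by move: L_neq0; rewrite -invr_eq0 -u2 expf_eq0.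
rewrite -(rank1_div_mxformZ _ _ _ u_neq0) mxformZl mxformZr mulrA -expr2 u2 mulVf //.
rewrite mulr1 invrN invrK; refine (posdef_rank1_update_normalized symM sigM _ _).
- have -> : mxconj (u *: c) = u^* *: mxconj c.
    by apply/matrixP => i j; rewrite !mxE rmorphM.
  by rewrite mxformZl mxformZr mulrA pmulr_rlt0 // mulrC mul_conjC_gt0.
- by rewrite mxformZl mxformZr mulrA -expr2 u2 mulVf.
Qed.
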